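(* Let $(p_1,q_1),\ldots,(p_n,q_n)\in\mathbb{R}^2$ be a Pareto-optimal market and for $(p,q)\in\mathbb{R}^2$ let \[\operatorname{profit}(p,q)=(p-q)\cdot\bigl|\{i: p\le p_i \text{ and } q\ge q_i\}\bigr|.\] Let $q'\le q$ and let $p$ be such that $0<\operatorname{profit}(p,q)\le\operatorname{profit}(p,q')$. Then for every $p'\le p$, $\operatorname{profit}(p',q)\le\operatorname{profit}(p',q')$.
   Context: Customer $(p_i,q_i)$ considers product $(p,q)$ iff $p\le p_i$ and $q\ge q_i$. The market is Pareto-optimal: there are no two customers $i,j$ with $q_i>q_j$ and $p_i<p_j$. *)

From HB Require Import structures.
From mathcomp Require Import all_boot all_order all_algebra.
Set Implicit Arguments. Unset Strict Implicit. Unset Printing Implicit Defensive.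
Import Order.TTheory GRing.Theory Num.Theory.
Local Open Scope ring_scope.

Definition pareto_optimal (R : realFieldType) (n : nat) (P Q : 'I_n -> R) : Prop :=
  forall i j : 'I_n, ~ (Q j < Q i /\ P i < P j).

Definition considers (R : realFieldType) (n : nat) (P Q : 'I_n -> R)
    (p q : R) (i : 'I_n) : bool := (p <= P i) && (Q i <= q).

Definition profit (R : realFieldType) (n : nat) (P Q : 'I_n -> R) (p q : R) : R :=
  (p - q) * (#|[set i : 'I_n | considers P Q p q i]|)%:R.

From HB Require Import structures.
From mathcomp Require Import all_boot all_order all_algebra.
Set Implicit Arguments. Unset Strict Implicit. Unset Printing Implicit Defensive.
Import Order.TTheory GRing.Theory Num.Theory.
Local Open Scope ring_scope.

(* Lowering the cost from q to q' loses the customers with q' < q_i <= q and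
   gains q - q' on each customer who still buys, so the inequality
   profit(p,q) <= profit(p,q') says (p - q) D(p) <= (q - q') N(p), where N(p)
   counts the buyers at (p,q') and D(p) the lost customers.  Lowering the
   price p to p' can only increase N.  By Pareto-optimality it cannot increase
   D: a lost customer i has q_i > q' >= q_j for any buyer j at (p,q'), hence
   p_i >= p_j >= p.  Since p > q, both sides move the right way. *)

Section Market.

Variables (R : realFieldType) (n : nat) (P Q : 'I_n -> R).

Definition buyers (p q : R) : {set 'I_n} := [set i | considers P Q p q i].

Lemma profit_buyers (p q : R) : profit P Q p q = (p - q) * #|buyers p q|%:R.
Proof. by []. Qed.

Lemma buyers_antitone_price (p p' q : R) :
  p' <= p -> buyers p q \subset buyers p' q.
Proof.
move=> hp'; apply/subsetP => i; rewrite !inE /considers => /andP[hpi ->].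
by rewrite (le_trans hp' hpi).
Qed.

Lemma buyers_monotone_cost (p : R) {q q' : R} :
  q' <= q -> buyers p q' \subset buyers p q.
Proof.
move=> hq; apply/subsetP => i; rewrite !inE /considers => /andP[-> hqi].
exact: le_trans hqi hq.
Qed.

Lemma profit_le_lower_costE (p q q' : R) : q' <= q ->
  (profit P Q p q <= profit P Q p q') =
  ((p - q) * #|buyers p q :\: buyers p q'|%:R <= (q - q') * #|buyers p q'|%:R).
Proof.
move=> hq; rewrite !profit_buyers -(cardsID (buyers p q') (buyers p q)).
rewrite (setIidPr (buyers_monotone_cost p hq)) natrD.
have -> : p - q' = (p - q) + (q - q') by rewrite addrA subrK.
by rewrite mulrDr (mulrDl (p - q)) lerD2l.
Qed.

Lemma profit_gt0_cost_lt (p q : R) : 0 < profit P Q p q -> q < p.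
Proof.
rewrite profit_buyers; apply: contraTlt => hpq.
by rewrite -leNgt mulr_le0_ge0 ?subr_le0.
Qed.

Lemma profit_gt0_buyers (p q : R) : 0 < profit P Q p q -> (0 < #|buyers p q|)%N.
Proof.
rewrite profit_buyers lt0n; apply: contraTneq => ->.
by rewrite mulr0 ltxx.
Qed.

Lemma pareto_lost_buyers_antitone (p p' q q' : R) :
  pareto_optimal P Q -> p' <= p -> (0 < #|buyers p q'|)%N ->
  buyers p' q :\: buyers p' q' \subset buyers p q :\: buyers p q'.
Proof.
move=> hpar hp' /card_gt0P[j]; rewrite inE /considers => /andP[hpj hqj].
apply/subsetP => i; rewrite !inE /considers => /andP[hlost /andP[hp'i ->]].
rewrite hp'i /= -ltNge in hlost.
have hPji : P j <= P i.
  by rewrite leNgt; apply/negP => hlt; apply: (hpar i j); split; [exact: le_lt_trans hqj hlost|].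
by rewrite (le_trans hpj hPji) -ltNge hlost.
Qed.

End Market.

Theorem lemma2 (R : realFieldType) (n : nat) (P Q : 'I_n -> R)
    (hpar : pareto_optimal P Q) (p q q' : R) (hqq : q' <= q)
    (hpos : 0 < profit P Q p q) (hle : profit P Q p q <= profit P Q p q') :
  forall p' : R, p' <= p -> profit P Q p' q <= profit P Q p' q'.
Proof.
move=> p' hp'.
have hqp : q < p := profit_gt0_cost_lt hpos.
have hbuy : (0 < #|buyers P Q p q'|)%N := profit_gt0_buyers (lt_le_trans hpos hle).
rewrite profit_le_lower_costE // in hle; rewrite profit_le_lower_costE //.
have hN : #|buyers P Q p q'|%:R <= #|buyers P Q p' q'|%:R :> R.
  by rewrite ler_nat subset_leq_card // buyers_antitone_price.
have hD : #|buyers P Q p' q :\: buyers P Q p' q'|%:R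
          <= #|buyers P Q p q :\: buyers P Q p q'|%:R :> R.
  by rewrite ler_nat subset_leq_card // pareto_lost_buyers_antitone.
have [hp'q | hqp'] := lerP p' q.
  apply: (@le_trans _ _ 0); first by rewrite mulr_le0_ge0 ?subr_le0.
  by rewrite mulr_ge0 ?subr_ge0.
apply: le_trans (ler_wpM2l _ hN); last by rewrite subr_ge0.
apply: le_trans hle; apply: ler_pM hD; by rewrite ?ler0n ?subr_ge0 ?lerD2r // ltW.
Qed.
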